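(* There exists a constant $h>0$ (depending only on $x$ and $d_{\max}$) such that for every $k\ge t$ with $d_{\min}+1\le n-k\le d_{\max}+1$, writing $\ell=n-k$, we have $a_{k_1,\dots,k_x}<h\cdot n^{-\ell}$ for every tuple $(k_1,\dots,k_x)$ of integers with $t_i\le k_i\le a_i$ and $\sum_i k_i=k$, and $\alpha_k\le\frac{h}{n^2}$.
   Context: Random graph model: $V$ is a set of $n$ vertices, $B\subseteq V$ a target set with $|B|=t$, each $v\in V$ has a prescribed out-degree $d_v$ with $2\le d_{\min}\le d_v\le d_{\max}$ (constants independent of $n$), and for each $v$ independently its out-neighbour set is chosen uniformly among all $d_v$-element subsets of $V$. Let $d_1,\dots,d_x$ be the distinct out-degrees, $a_i$ the number of vertices of out-degree $d_i$, $t_i$ the number of vertices of $B$ of out-degree $d_i$. For $S\supseteq B$ containing $k_i$ vertices of out-degree $d_i$, $R(k_1,\dots,k_x)$ is the probability that every vertex of $S$ has a directed path to $B$ lying inside $S$. For $k=\sum_i k_i$ with $t_i\le k_i\le a_i$, $a_{k_1,\dots,k_x}=\left(\prod_{i=1}^x\binom{a_i-t_i}{k_i-t_i}\left(\binom{n-k}{d_i}/\binom{n}{d_i}\right)^{a_i-k_i}\right)R(k_1,\dots,k_x)$, with the factor $(\binom{n-k}{d_i}/\binom{n}{d_i})^{a_i-k_i}$ equal to $1$ when $a_i=k_i$ and $\binom{m}{d}=0$ for $d>m$, and $\alpha_k=\sum_{\sum_i k_i=k,\ t_i\le k_i\le a_i}a_{k_1,\dots,k_x}$. *)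

From mathcomp Require Import all_boot all_order all_algebra.
Set Implicit Arguments. Unset Strict Implicit. Unset Printing Implicit Defensive.
Import Order.TTheory GRing.Theory Num.Theory.
Local Open Scope ring_scope.

(* Vertex set V = 'I_n; d : 'I_n -> nat are the prescribed out-degrees. *)

Definition degs (n : nat) (d : 'I_n -> nat) : seq nat :=
  undup [seq d v | v <- enum 'I_n].

(* d_i  (0-based index i) *)
Definition deg_i (n : nat) (d : 'I_n -> nat) (i : nat) : nat := nth 0%N (degs d) i.

Definition acount (n : nat) (d : 'I_n -> nat) (i : nat) : nat :=
  #|[set v : 'I_n | d v == deg_i d i]|.

Definition tcount (n : nat) (d : 'I_n -> nat) (B : {set 'I_n}) (i : nat) : nat :=
  #|[set v in B | d v == deg_i d i]|.

(* Sample space: out-neighbour sets, N(v) a d_v-subset of V for every v.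
   The product of independent uniform choices is the uniform measure on it. *)
Definition config (n : nat) (d : 'I_n -> nat) : {set {ffun 'I_n -> {set 'I_n}}} :=
  [set f : {ffun 'I_n -> {set 'I_n}} | [forall v, #|f v| == d v]].

Definition reaches_in (n : nat) (f : {ffun 'I_n -> {set 'I_n}}) (S B : {set 'I_n}) : bool :=
  [forall u in S, [exists b in B,
     connect [rel a c | [&& a \in S, c \in S & c \in f a]] u b]].

Definition prob_reach (R : realFieldType) (n : nat) (d : 'I_n -> nat) (S B : {set 'I_n}) : R :=
  #|[set f in config d | reaches_in f S B]|%:R / #|config d|%:R.

(* R(k_1,...,k_x): the probability above for a set S ⊇ B containing k_i
   vertices of out-degree d_i (independent of the choice of S by symmetry). *)
Definition Rtuple (R : realFieldType) (n : nat) (d : 'I_n -> nat) (B : {set 'I_n})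
    (x : nat) (kk : 'I_x -> nat) : R :=
  match [pick S : {set 'I_n} | (B \subset S) &&
           [forall i : 'I_x, #|[set v in S | d v == deg_i d i]| == kk i]] with
  | Some S0 => prob_reach R d S0 B
  | None => 0
  end.

Definition acoef (R : realFieldType) (n : nat) (d : 'I_n -> nat) (B : {set 'I_n})
    (x : nat) (kk : 'I_x -> nat) : R :=
  let k := (\sum_(i < x) kk i)%N in
  (\prod_(i < x)
      ('C(acount d i - tcount d B i, kk i - tcount d B i)%:R
       * ('C(n - k, deg_i d i)%:R / 'C(n, deg_i d i)%:R) ^+ (acount d i - kk i)))
  * Rtuple R d B kk.

(* alpha_k : sum of a_{k_1..k_x} over t_i <= k_i <= a_i with sum k_i = k
   (each k_i <= a_i <= n, so k_i ranges in 'I_n.+1 without loss). *)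
Definition alpha (R : realFieldType) (n : nat) (d : 'I_n -> nat) (B : {set 'I_n})
    (x k : nat) : R :=
  \sum_(kk : {ffun 'I_x -> 'I_n.+1} |
          [forall i : 'I_x, (tcount d B i <= kk i <= acount d i)%N]
          && ((\sum_(i < x) kk i)%N == k))
     acoef R d B (fun i => nat_of_ord (kk i)).

From mathcomp Require Import all_boot all_order all_algebra.
From mathcomp Require Import zify ring.
Import Order.TTheory GRing.Theory Num.Theory.

(* Write l = n - k.  Since C(a_i - t_i, k_i - t_i) <= n^(a_i - k_i), each factor
   of a_{k_1..k_x} is at most (n C(l, d_i) / C(n, d_i))^(a_i - k_i), which is
   at most (c / n)^(a_i - k_i) because C(l, d_i) is bounded in terms of d_max
   and C(n, d_i) >= n^2 / (2 d_i!).
   The exponents add up to n - k = l and a probability is at most 1,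
   so a_{k_1..k_x} <= c^l / n^l.
   The deficits a_i - k_i are at most l <= d_max + 1, so alpha_k has at most
   (d_max + 2)^x terms, and n^l >= n^2 since l >= 3. *)

Lemma ffact_leq_expn (n m : nat) : (n ^_ m <= n ^ m)%N.
Proof.
have -> : (n ^ m = \prod_(i < m) n)%N by rewrite prod_nat_const card_ord.
rewrite ffact_prod.
by apply: leq_prod => i _; apply: leq_subr.
Qed.

Lemma bin_leq_expn (n m : nat) : ('C(n, m) <= n ^ m)%N.
Proof.
apply: leq_trans (ffact_leq_expn n m); rewrite -bin_ffact.
exact: leq_pmulr (fact_gt0 m).
Qed.

Lemma leq_ffactr (n m1 m2 : nat) : (m1 <= m2 <= n)%N -> (n ^_ m1 <= n ^_ m2)%N.
Proof.
case/andP; elim: m2 => [|m IH]; first by rewrite leqn0 => /eqP ->.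
rewrite leq_eqVlt => /orP[/eqP -> //|lt_m1m] lt_mn.
rewrite ffactnSr (leq_trans (IH lt_m1m (ltnW lt_mn))) // leq_pmulr //.
by rewrite subn_gt0.
Qed.

Lemma sqr_leq_ffact (n m : nat) : (2 <= m <= n)%N -> (n ^ 2 <= 2 * n ^_ m)%N.
Proof.
move=> /andP[m2 mn].
have le_ffact : (n ^_ 2 <= n ^_ m)%N by rewrite leq_ffactr ?m2.
apply: leq_trans (leq_mul (leqnn 2) le_ffact); rewrite ffactnS ffactn1; nia.
Qed.

Lemma bin_sub_leq_expn (N a t k : nat) :
  (t <= k <= a)%N -> (a - t <= N)%N -> ('C(a - t, k - t) <= N ^ (a - k))%N.
Proof.
move=> /andP[tk ka] atN.
have -> : (k - t = (a - t) - (a - k))%N by lia.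
rewrite bin_sub; last by lia.
apply: leq_trans (bin_leq_expn _ _) _.
by case: (a - k)%N => [|e]; rewrite ?expn0 // leq_exp2r.
Qed.

Local Open Scope ring_scope.

(* The constant c: for l <= b + 1 and m <= b, C(l, m) <= (b+1)^b and m! <= b!. *)
Definition ratio_const (b : nat) : nat := (b.+1 ^ b * (2 * b`!))%N.

Lemma ratio_const_gt0 (b : nat) : (0 < ratio_const b)%N.
Proof. by rewrite !muln_gt0 expn_gt0 fact_gt0. Qed.

Lemma bin_ratio_le (R : realFieldType) (n l m b : nat) :
  (2 <= m <= b)%N -> (l <= b.+1)%N -> (0 < n)%N ->
  'C(l, m)%:R / 'C(n, m)%:R <= (ratio_const b)%:R / n%:R ^+ 2 :> R.
Proof.
move=> /andP[m2 mb] lb n0.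
have [mn|nm] := leqP m n; last first.
  by rewrite (bin_small nm) invr0 mulr0 divr_ge0 ?exprn_ge0.
have Cn0 : 0 < 'C(n, m)%:R :> R by rewrite ltr0n bin_gt0.
rewrite ler_pdivrMr // mulrAC ler_pdivlMr ?exprn_gt0 ?ltr0n //.
rewrite -natrX -!natrM ler_nat /ratio_const -mulnA.
apply: leq_mul.
  apply: leq_trans (bin_leq_expn l m) (leq_trans _ (leq_pexp2l _ mb)) => //.
  by rewrite leq_exp2r //; lia.
apply: leq_trans (sqr_leq_ffact n m _) _; first by rewrite m2.
by rewrite -bin_ffact mulnA mulnAC leq_mul2r leq_mul2l leq_fact ?orbT.
Qed.

Lemma acoef_factor_le (R : realFieldType) (n l m b a t k : nat) :
  (2 <= m <= b)%N -> (l <= b.+1)%N -> (0 < n)%N -> (t <= k <= a)%N -> (a <= n)%N ->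
  0 <= ('C(a - t, k - t)%:R : R) * ('C(l, m)%:R / 'C(n, m)%:R) ^+ (a - k)
    <= ((ratio_const b)%:R / n%:R) ^+ (a - k).
Proof.
move=> hm lb n0 htka an; set r : R := _ / _.
have r0 : 0 <= r by rewrite divr_ge0.
apply/andP; split; first by rewrite mulr_ge0 ?exprn_ge0.
have -> : (ratio_const b)%:R / n%:R
          = n%:R * ((ratio_const b)%:R / n%:R ^+ 2) :> R.
  by field; rewrite pnatr_eq0 -lt0n.
rewrite [X in _ <= X]exprMn; apply: ler_pM; rewrite ?exprn_ge0 //.
  by rewrite -natrX ler_nat bin_sub_leq_expn // (leq_trans (leq_subr _ _)).
have r_le : r <= (ratio_const b)%:R / n%:R ^+ 2 by apply: bin_ratio_le.
by rewrite lerXn2r ?nnegrE // (le_trans r0 r_le).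
Qed.

Lemma Rtuple_bounds (R : realFieldType) (n : nat) (d : 'I_n -> nat)
    (B : {set 'I_n}) (x : nat) (kk : 'I_x -> nat) :
  0 <= Rtuple R d B kk <= 1.
Proof.
rewrite /Rtuple; case: pickP => [S _|_]; last by rewrite lexx ler01.
have le_card : (#|[set f in config d | reaches_in f S B]| <= #|config d|)%N.
  by apply/subset_leq_card/subsetP => f; rewrite inE => /andP[].
rewrite /prob_reach divr_ge0 //=.
have [->|c0] := eqVneq #|config d| 0%N; first by rewrite invr0 mulr0 ler01.
by rewrite ler_pdivrMr ?ltr0n ?lt0n // mul1r ler_nat.
Qed.

Section Bounds.

Context {n dmin dmax x : nat} {d : 'I_n -> nat} {B : {set 'I_n}}.
Hypothesis dmin2 : (2 <= dmin)%N.
Hypothesis d_range : forall v, (dmin <= d v <= dmax)%N.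
Hypothesis size_degs : size (degs d) = x.

Lemma deg_i_range (i : 'I_x) : (2 <= deg_i d i <= dmax)%N.
Proof.
have : deg_i d i \in degs d by rewrite mem_nth // size_degs.
rewrite mem_undup => /mapP[v _ ->].
by case/andP: (d_range v) => /(leq_trans dmin2) -> ->.
Qed.

Lemma acount_leq_n (i : nat) : (acount d i <= n)%N.
Proof. by rewrite /acount (leq_trans (max_card _)) ?card_ord. Qed.

(* Each vertex has exactly one degree in the duplicate-free list degs d. *)
Lemma sum_acount : (\sum_(i < x) acount d i)%N = n.
Proof.
rewrite -size_degs.
under eq_bigr do rewrite /acount -sum1_card big_mkcond /=.
rewrite exchange_big /= -[n in RHS]card_ord -sum1_card.
apply: eq_bigr => v _.
under eq_bigr do rewrite inE.
rewrite -(big_mkord xpredT (fun i => if d v == deg_i d i then 1 else 0)%N).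
rewrite -(big_nth 0%N xpredT (fun a => if d v == a then 1 else 0)%N).
rewrite -big_mkcond sum1_count (@eq_count _ _ (pred1 (d v))) => [|a]; last first.
  by rewrite /= eq_sym.
by rewrite count_uniq_mem ?undup_uniq // mem_undup map_f ?mem_enum.
Qed.

Lemma sum_deficits (kk : 'I_x -> nat) :
  (forall i : 'I_x, kk i <= acount d i)%N ->
  (\sum_(i < x) (acount d i - kk i))%N = (n - \sum_(i < x) kk i)%N.
Proof. by move=> hk; rewrite sumnB ?sum_acount. Qed.

Variable R : realFieldType.

Lemma acoef_le (k : nat) (kk : 'I_x -> nat) :
  (dmin + 1 <= n - k <= dmax + 1)%N ->
  (forall i : 'I_x, tcount d B i <= kk i <= acount d i)%N ->
  (\sum_(i < x) kk i)%N = k ->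
  acoef R d B kk <= (ratio_const dmax ^ dmax.+1)%:R / n%:R ^+ (n - k).
Proof.
move=> hl hk sum_k.
have n0 : (0 < n)%N by lia.
have hF (i : 'I_x) : 0 <= ('C(acount d i - tcount d B i, kk i - tcount d B i)%:R : R)
      * ('C(n - k, deg_i d i)%:R / 'C(n, deg_i d i)%:R) ^+ (acount d i - kk i)
    <= ((ratio_const dmax)%:R / n%:R) ^+ (acount d i - kk i).
  by apply: acoef_factor_le; rewrite ?deg_i_range ?acount_leq_n //; lia.
have /andP[Rt0 Rt1] := Rtuple_bounds R n d B x kk.
rewrite /acoef /= sum_k -[X in _ <= X]mulr1 ler_pM //.
- by rewrite prodr_ge0 // => i _; case/andP: (hF i).
- apply: le_trans; first exact: ler_prod (fun i _ => hF i).
  rewrite prodrXr sum_deficits => [|i]; last by case/andP: (hk i).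
  rewrite sum_k expr_div_n -!natrX ler_pM2r ?invr_gt0 ?ltr0n ?expn_gt0 ?n0 //.
  by rewrite ler_nat leq_pexp2l ?ratio_const_gt0 //; lia.
Qed.

(* An admissible tuple is determined by its deficits a_i - k_i <= l. *)
Lemma card_admissible_le (k L : nat) : (n - k <= L)%N ->
  (#|[pred kk : {ffun 'I_x -> 'I_n.+1} |
       [forall i : 'I_x, (tcount d B i <= kk i <= acount d i)%N]
       && ((\sum_(i < x) kk i)%N == k)]| <= L.+1 ^ x)%N.
Proof.
move=> le_L.
pose deficits (kk : {ffun 'I_x -> 'I_n.+1}) :=
  [ffun i : 'I_x => (inord (acount d i - kk i) : 'I_L.+1)].
have -> : (L.+1 ^ x = #|{ffun 'I_x -> 'I_L.+1}|)%N.
  by rewrite card_ffun !card_ord.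
apply: (@leq_card_in _ _ deficits) => k1 k2.
rewrite !unfold_in => /andP[/forallP h1 /eqP s1] /andP[/forallP h2 /eqP s2].
have def_le (kk : {ffun 'I_x -> 'I_n.+1}) (i : 'I_x) :
    (forall j : 'I_x, tcount d B j <= kk j <= acount d j)%N ->
    (\sum_(i < x) kk i)%N = k -> (acount d i - kk i < L.+1)%N.
  move=> hk sum_kk; rewrite ltnS (leq_trans _ le_L) //.
  rewrite -sum_kk -sum_deficits => [|j]; last by case/andP: (hk j).
  by rewrite (bigD1 i) //= leq_addr.
move=> /ffunP e; apply/ffunP => i; apply: val_inj.
move: (congr1 val (e i)); rewrite !ffunE /= !inordK ?def_le //.
by have := h1 i; have := h2 i; lia.
Qed.

Lemma alpha_le (k : nat) :
  (dmin + 1 <= n - k <= dmax + 1)%N ->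
  alpha R d B x k
    <= (dmax.+2 ^ x * ratio_const dmax ^ dmax.+1)%:R / n%:R ^+ (n - k).
Proof.
move=> hl.
have term_le (kk : {ffun 'I_x -> 'I_n.+1}) :
    [forall i : 'I_x, (tcount d B i <= kk i <= acount d i)%N]
      && ((\sum_(i < x) kk i)%N == k) ->
    acoef R d B (fun i => kk i)
      <= (ratio_const dmax ^ dmax.+1)%:R / n%:R ^+ (n - k).
  by case/andP=> /forallP hk /eqP sum_k; apply: acoef_le.
apply: le_trans (ler_sum _ term_le) _.
rewrite sumr_const -[_ *+ #|_|]mulr_natl natrM -mulrA.
rewrite ler_wpM2r ?divr_ge0 ?exprn_ge0 //.
by rewrite ler_nat card_admissible_le //; lia.
Qed.

End Bounds.

Theorem lemma17 (R : realFieldType) (x dmax : nat) :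
  exists2 h : R, 0 < h &
  forall (n dmin : nat) (d : 'I_n -> nat) (B : {set 'I_n}),
    (2 <= dmin)%N ->
    (forall v, dmin <= d v <= dmax)%N ->
    size (degs d) = x ->
    forall k : nat, (#|B| <= k)%N -> (dmin + 1 <= n - k <= dmax + 1)%N ->
      (forall kk : 'I_x -> nat,
          (forall i : 'I_x, tcount d B i <= kk i <= acount d i)%N ->
          (\sum_(i < x) kk i)%N = k ->
          acoef R d B kk < h * n%:R ^- (n - k))
      /\ alpha R d B x k <= h / n%:R ^+ 2.
Proof.
pose h0 := (dmax.+2 ^ x * ratio_const dmax ^ dmax.+1)%N.
have h0_gt0 : (0 < h0)%N by rewrite muln_gt0 !expn_gt0 ratio_const_gt0.
exists (h0.*2)%:R; first by rewrite ltr0n double_gt0.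
move=> n dmin d B dmin2 d_range size_degs k _ hl.
have n_gt0 : (0 < n)%N by lia.
have nl_gt0 : 0 < n%:R ^+ (n - k) :> R by rewrite exprn_gt0 ?ltr0n.
split=> [kk hk sum_k|].
  apply: le_lt_trans (acoef_le dmin2 d_range size_degs R _ _ hl hk sum_k) _.
  rewrite ltr_pM2r ?invr_gt0 // ltr_nat.
  have : (ratio_const dmax ^ dmax.+1 <= h0)%N by rewrite leq_pmull ?expn_gt0.
  lia.
apply: le_trans (alpha_le dmin2 d_range size_degs R _ hl) _.
rewrite ler_pdivrMr // mulrAC ler_pdivlMr ?exprn_gt0 ?ltr0n //.
rewrite -!natrX -!natrM ler_nat -addnn.
by apply: leq_mul; [lia | rewrite leq_pexp2l //; lia].
Qed.
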